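(* Let $Q_1,Q_2\ge1$ be integers, $\lambda_1,\lambda_2,\mu>0$, $p_{12},p_{21}\in[0,1]$, $s=\lambda_1+\lambda_2$, $s_1=\lambda_1+\lambda_2p_{21}$, $s_2=\lambda_2+\lambda_1p_{12}$, and $$q_i=\frac{\lambda_i}{s+\mu}\ (i=1,2),\quad q_3=\frac{\mu}{s+\mu},\quad A_1=\frac{s_1}{s_1+\mu},\quad A_2=\frac{s_2}{s_2+\mu},\quad B_1=\frac{\lambda_1}{s_2+\mu},\quad B_2=\frac{\lambda_2}{s_1+\mu}.$$ Then the stationary distribution $(\pi_{(j_1,j_2)})$ of the inventory CTMC with random replenishment (see context) is: $$\pi_{(Q_1-i_1,Q_2-i_2)}=\binom{i_1+i_2}{i_1}q_1^{i_1}q_2^{i_2}q_3,\quad 0\le i_1\le Q_1-1,\ 0\le i_2\le Q_2-1;$$ $$\pi_{(Q_1-i_1,0)}=B_2q_2^{Q_2-1}q_3\sum_{k=0}^{i_1}A_1^{i_1-k}q_1^k\binom{Q_2+k-1}{k},\quad 0\le i_1\le Q_1-1;$$ $$\pi_{(0,Q_2-i_2)}=B_1q_1^{Q_1-1}q_3\sum_{k=0}^{i_2}A_2^{i_2-k}q_2^k\binom{Q_1+k-1}{k},\quad 0\le i_2\le Q_2-1;$$ $$\pi_{(0,0)}=\frac{s_1}{\mu}B_2q_2^{Q_2-1}q_3\sum_{k=0}^{Q_1-1}A_1^{Q_1-1-k}q_1^k\binom{Q_2+k-1}{k}+\frac{s_2}{\mu}B_1q_1^{Q_1-1}q_3\s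um_{k=0}^{Q_2-1}A_2^{Q_2-1-k}q_2^k\binom{Q_1+k-1}{k}.$$
   Context: Inventory CTMC with random replenishment: state space $\{0,\dots,Q_1\}\times\{0,\dots,Q_2\}$; demand transitions: from $(i_1,i_2)$ with $i_1,i_2\ge1$, to $(i_1-1,i_2)$ at rate $\lambda_1$ and to $(i_1,i_2-1)$ at rate $\lambda_2$; from $(i_1,0)$ with $i_1\ge1$, to $(i_1-1,0)$ at rate $s_1$; from $(0,i_2)$ with $i_2\ge1$, to $(0,i_2-1)$ at rate $s_2$; no demand transitions out of $(0,0)$. In addition, from every state there is a replenishment transition to $(Q_1,Q_2)$ at rate $\mu$. (This models Poisson arrivals of rate $\lambda_i$ for product $i$, a customer for out-of-stock product $i$ buying the other product $j$ w.p. $p_{ij}$ if it is in stock, and exponential($\mu$) replenishment times restoring both stocks to $(Q_1,Q_2)$.) *)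

From HB Require Import structures.
From mathcomp Require Import all_boot all_order all_algebra.
Set Implicit Arguments. Unset Strict Implicit. Unset Printing Implicit Defensive.
Import Order.TTheory GRing.Theory Num.Theory.
Local Open Scope ring_scope.

Section Inventory.
Variables (R : realFieldType) (Q1 Q2 : nat) (l1 l2 mu p12 p21 : R).

Definition state := ('I_Q1.+1 * 'I_Q2.+1)%type.

Definition s_ := l1 + l2.
Definition s1_ := l1 + l2 * p21.
Definition s2_ := l2 + l1 * p12.

Definition demand_rate (i1 i2 j1 j2 : nat) : R :=
  if (0 < i1)%N && (0 < i2)%N then
    (if (j1 == i1.-1) && (j2 == i2) then l1 else 0) +
    (if (j1 == i1) && (j2 == i2.-1) then l2 else 0)
  else if (0 < i1)%N && (i2 == 0)%N then
    (if (j1 == i1.-1) && (j2 == 0)%N then s1_ else 0)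
  else if (i1 == 0)%N && (0 < i2)%N then
    (if (j1 == 0)%N && (j2 == i2.-1) then s2_ else 0)
  else 0.

(* Total transition rate from x to y (used only for x != y):
   demand transitions plus replenishment to (Q1,Q2) at rate mu. *)
Definition rate (x y : state) : R :=
  demand_rate x.1 x.2 y.1 y.2 +
  (if ((y.1 : nat) == Q1) && ((y.2 : nat) == Q2) then mu else 0).

Definition stationary (pi : state -> R) : Prop :=
  (forall x, 0 <= pi x) /\ (\sum_x pi x = 1) /\
  (forall y : state,
     \sum_(x | x != y) pi x * rate x y = pi y * \sum_(z | z != y) rate y z).

Definition q1_ := l1 / (s_ + mu).
Definition q2_ := l2 / (s_ + mu).
Definition q3_ := mu / (s_ + mu).
Definition A1_ := s1_ / (s1_ + mu).
Definition A2_ := s2_ / (s2_ + mu).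
Definition B1_ := l1 / (s2_ + mu).
Definition B2_ := l2 / (s1_ + mu).

Definition edge1 (i1 : nat) : R :=
  B2_ * q2_ ^+ Q2.-1 * q3_ *
  \sum_(0 <= k < i1.+1) A1_ ^+ (i1 - k) * q1_ ^+ k * ('C(Q2 + k - 1, k))%:R.
Definition edge2 (i2 : nat) : R :=
  B1_ * q1_ ^+ Q1.-1 * q3_ *
  \sum_(0 <= k < i2.+1) A2_ ^+ (i2 - k) * q2_ ^+ k * ('C(Q1 + k - 1, k))%:R.

Definition pi_formula (j1 j2 : nat) : R :=
  if (0 < j1)%N && (0 < j2)%N then
    let i1 := (Q1 - j1)%N in let i2 := (Q2 - j2)%N in
    ('C(i1 + i2, i1))%:R * q1_ ^+ i1 * q2_ ^+ i2 * q3_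
  else if (0 < j1)%N then edge1 (Q1 - j1)
  else if (0 < j2)%N then edge2 (Q2 - j2)
  else s1_ / mu * edge1 Q1.-1 + s2_ / mu * edge2 Q2.-1.

End Inventory.

From HB Require Import structures.
From mathcomp Require Import all_boot all_order all_algebra zify ring.
Set Implicit Arguments. Unset Strict Implicit. Unset Printing Implicit Defensive.
Import Order.TTheory GRing.Theory Num.Theory.
Local Open Scope ring_scope.

(* At a state y other than the full state (Q1,Q2) the balance equation reads
   (outgoing rate of y) * pi y = inflow from the at most two states one demand step above y;
   as that outgoing rate is positive, these equations determine pi from pi (Q1,Q2) by
   induction on the distance to (Q1,Q2).  The balance equations always sum to an identity,
   so balance at (Q1,Q2) follows from the others, and together with normalisation it gives
   pi (Q1,Q2) * (s + mu) = mu, i.e. pi (Q1,Q2) = q3.  The proposed formula satisfies the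
   balance equations: in the interior they are Pascal's rule for the weights
   C(i1+i2,i1) q1^i1 q2^i2, on the two edges they are the first-order recursions of the
   convolution sums, and at (0,0) they hold by definition. *)

Section FlowConservation.
Variables (R : pzRingType) (T : finType) (r : T -> T -> R).

Lemma big_if_const (P : pred T) (b : bool) (F : T -> R) :
  \sum_(i | P i) (if b then F i else 0) = if b then \sum_(i | P i) F i else 0.
Proof. by case: b => //; rewrite big1. Qed.

Definition inflow (g : T -> R) (y : T) : R := \sum_(x | x != y) g x * r x y.
Definition outflow (g : T -> R) (y : T) : R := g y * \sum_(z | z != y) r y z.

Lemma sum_inflow_outflow (g : T -> R) : \sum_y inflow g y = \sum_y outflow g y.
Proof.
rewrite /inflow /outflow; under eq_bigr do rewrite big_mkcond.
under [RHS]eq_bigr do rewrite mulr_sumr big_mkcond.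
rewrite exchange_big; apply: eq_bigr => x _; apply: eq_bigr => y _ /=.
by rewrite eq_sym; case: eqP; rewrite ?mulr0.
Qed.

Lemma balance_last (g : T -> R) (y0 : T) :
  (forall y, y != y0 -> inflow g y = outflow g y) -> inflow g y0 = outflow g y0.
Proof.
move=> bal; have := sum_inflow_outflow g.
rewrite (bigD1 y0) //= [in RHS](bigD1 y0) //=.
by rewrite (eq_bigr _ bal) => /addIr.
Qed.

End FlowConservation.

Section WeightRecursions.
Variable R : comPzRingType.

Lemma sum_conv_recr (A q : R) (c : nat -> R) (i : nat) :
  \sum_(0 <= k < i.+2) A ^+ (i.+1 - k) * q ^+ k * c k =
  A * \sum_(0 <= k < i.+1) A ^+ (i - k) * q ^+ k * c k + q ^+ i.+1 * c i.+1.
Proof.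
rewrite big_nat_recr //= subnn expr0 mul1r mulr_sumr; congr (_ + _).
by apply: eq_big_nat => k /andP [_ lt_ki]; rewrite subSn // exprS !mulrA.
Qed.

Definition binw (x y : R) (i j : nat) : R := 'C(i + j, i)%:R * x ^+ i * y ^+ j.

Lemma binw_rec (x y : R) (i j : nat) : (0 < i + j)%N ->
  binw x y i j = (if (0 < i)%N then x * binw x y i.-1 j else 0) +
                 (if (0 < j)%N then y * binw x y i j.-1 else 0).
Proof.
rewrite /binw; case: i => [|i]; case: j => [|j] //= _.
- by rewrite !add0n !bin0 add0r exprS; ring.
- by rewrite !addn0 !binn addr0 exprS; ring.
- by rewrite addSn addnS binS natrD !exprS; ring.
Qed.

End WeightRecursions.

Section InventoryChain.
Variables (R : realFieldType) (Q1 Q2 : nat) (l1 l2 mu p12 p21 : R).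

Local Notation state := (state Q1 Q2).
Local Notation s := (s_ l1 l2).
Local Notation s1 := (s1_ l1 l2 p21).
Local Notation s2 := (s2_ l1 l2 p12).
Local Notation q1 := (q1_ l1 l2 mu).
Local Notation q2 := (q2_ l1 l2 mu).
Local Notation q3 := (q3_ l1 l2 mu).
Local Notation A1 := (A1_ l1 l2 mu p21).
Local Notation A2 := (A2_ l1 l2 mu p12).
Local Notation B1 := (B1_ l1 l2 mu p12).
Local Notation B2 := (B2_ l1 l2 mu p21).
Local Notation demand_rate := (demand_rate l1 l2 p12 p21).
Local Notation rate := (rate l1 l2 mu p12 p21).
Local Notation edge1 := (edge1 Q2 l1 l2 mu p21).
Local Notation edge2 := (edge2 Q1 l1 l2 mu p12).
Local Notation pi_formula := (pi_formula Q1 Q2 l1 l2 mu p12 p21).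

Definition drop_rate1 (j2 : nat) : R := if (0 < j2)%N then l1 else s1.
Definition drop_rate2 (j1 : nat) : R := if (0 < j1)%N then l2 else s2.

Definition demand_out (j1 j2 : nat) : R :=
  (if (0 < j1)%N then drop_rate1 j2 else 0) + (if (0 < j2)%N then drop_rate2 j1 else 0).

Lemma demand_rate_to (x1 x2 y1 y2 : nat) : demand_rate x1 x2 y1 y2 =
  (if (x1 == y1.+1) && (x2 == y2) then drop_rate1 y2 else 0) +
  (if (x1 == y1) && (x2 == y2.+1) then drop_rate2 y1 else 0).
Proof.
rewrite /demand_rate /drop_rate1 /drop_rate2.
case: x1 => [|x1]; case: x2 => [|x2]; case: y1 => [|y1]; case: y2 => [|y2] /=;
  rewrite ?eqSS ?addr0 ?add0r //;
  repeat (case: eqP => //= ?); subst; rewrite ?addr0 ?add0r //; try lia.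
Qed.

Lemma demand_rate_from (y1 y2 z1 z2 : nat) : demand_rate y1 y2 z1 z2 =
  (if (0 < y1)%N then if (z1 == y1.-1) && (z2 == y2) then drop_rate1 y2 else 0 else 0) +
  (if (0 < y2)%N then if (z1 == y1) && (z2 == y2.-1) then drop_rate2 y1 else 0 else 0).
Proof. by rewrite /demand_rate; case: y1 => [|y1]; case: y2 => [|y2]; rewrite /= ?addr0 ?add0r. Qed.

Definition top : state := (ord_max, ord_max).

Lemma eq_top (y : state) : (y == top) = ((y.1 : nat) == Q1) && ((y.2 : nat) == Q2).
Proof. by case: y. Qed.

Lemma state_le1 (x : state) : (x.1 <= Q1)%N. Proof. by rewrite -ltnS. Qed.
Lemma state_le2 (x : state) : (x.2 <= Q2)%N. Proof. by rewrite -ltnS. Qed.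

Lemma big_neq_at (F : state -> R) (a b : nat) (y : state) :
  \sum_(x | x != y) (if ((x.1 : nat) == a) && ((x.2 : nat) == b) then F x else 0) =
  if [&& (a <= Q1)%N, (b <= Q2)%N & ~~ (((y.1 : nat) == a) && ((y.2 : nat) == b))]
  then F (inord a, inord b) else 0.
Proof.
have coordsE (x : state) : ((x.1 : nat) == a) && ((x.2 : nat) == b) ->
    x = (inord a, inord b).
  by case: x => x1 x2 /andP [/eqP <- /eqP <-] /=; rewrite !inord_val.
case: ifP => [/and3P [le_a le_b ne_y] | not_in].
- have ne_ab : (inord a, inord b) != y :> state.
    by apply: contra ne_y => /eqP <-; rewrite /= !inordK ?eqxx.
  rewrite (bigD1 ((inord a, inord b) : state)) //= !inordK // !eqxx big1 ?addr0 //.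
  move=> x /andP [_ ne_x]; case: ifP => // /coordsE x_ab.
  by rewrite x_ab eqxx in ne_x.
- apply: big1 => x ne_x; case: ifPn => // /[dup] /coordsE x_ab /andP [/eqP a_x /eqP b_x].
  move: not_in; rewrite -{1}a_x -{1}b_x state_le1 state_le2 /= => /negbFE y_ab.
  by rewrite x_ab -(coordsE y y_ab) eqxx in ne_x.
Qed.

Lemma inflowE (g : state -> R) (y : state) : inflow rate g y =
  (if (y.1 < Q1)%N then g (inord y.1.+1, inord y.2) * drop_rate1 y.2 else 0) +
  (if (y.2 < Q2)%N then g (inord y.1, inord y.2.+1) * drop_rate2 y.1 else 0) +
  (if y == top then mu * \sum_(x | x != y) g x else 0).
Proof.
rewrite /inflow /rate -eq_top.
under eq_bigr do rewrite demand_rate_to !mulrDr !(fun_if (GRing.mul (g _))) !mulr0.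
rewrite !big_split /= !big_neq_at big_if_const -mulr_suml state_le1 state_le2.
rewrite eqxx (ltn_eqF (ltnSn _)) (ltn_eqF (ltnSn y.2)) andbF /= !andbT.
rewrite /drop_rate1 /drop_rate2.
by congr (_ + _ + _); repeat case: ifP => _ //; rewrite mulrC.
Qed.

Lemma out_rateE (y : state) :
  \sum_(z | z != y) rate y z = demand_out y.1 y.2 + (if y == top then 0 else mu).
Proof.
rewrite /rate; under eq_bigr do rewrite demand_rate_from.
rewrite !big_split /= !big_if_const !big_neq_at !state_le1 !state_le2 !leqnn /demand_out.
have le_pred1 : ((y.1).-1 <= Q1)%N by apply: leq_trans (leq_pred _) (state_le1 _).
have le_pred2 : ((y.2).-1 <= Q2)%N by apply: leq_trans (leq_pred _) (state_le2 _).
rewrite le_pred1 le_pred2 eq_top /=; congr (_ + _ + _).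
- by case: ifP => // pos; rewrite gtn_eqF ?ltn_predL.
- by case: ifP => // pos; rewrite [_ == _.-1]gtn_eqF ?ltn_predL ?andbF.
- by case: (_ && _).
Qed.

Hypotheses (hl1 : 0 < l1) (hl2 : 0 < l2) (hmu : 0 < mu) (hp12 : 0 <= p12) (hp21 : 0 <= p21).

Lemma s_ge0 : 0 <= s. Proof. by rewrite addr_ge0 // ltW. Qed.
Lemma s1_ge0 : 0 <= s1. Proof. by rewrite /s1_ addr_ge0 ?mulr_ge0 // ltW. Qed.
Lemma s2_ge0 : 0 <= s2. Proof. by rewrite /s2_ addr_ge0 ?mulr_ge0 // ltW. Qed.

Lemma s_mu_neq0 : s + mu != 0. Proof. by rewrite lt0r_neq0 // /s_ !addr_gt0. Qed.
Lemma s1_mu_neq0 : s1 + mu != 0. Proof. exact/lt0r_neq0/(ltr_wpDl s1_ge0). Qed.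
Lemma s2_mu_neq0 : s2 + mu != 0. Proof. exact/lt0r_neq0/(ltr_wpDl s2_ge0). Qed.

Lemma demand_out_ge0 (j1 j2 : nat) : 0 <= demand_out j1 j2.
Proof.
rewrite /demand_out /drop_rate1 /drop_rate2.
by apply: addr_ge0; repeat case: ifP => _; rewrite ?(ltW hl1) ?(ltW hl2) ?s1_ge0 ?s2_ge0.
Qed.

Lemma out_rate_gt0 (y : state) : y != top -> 0 < \sum_(z | z != y) rate y z.
Proof. by rewrite out_rateE => /negbTE ->; apply/ltr_wpDl/hmu/demand_out_ge0. Qed.

Definition balanced_off_top (g : state -> R) : Prop :=
  forall y, y != top -> inflow rate g y = outflow rate g y.

Lemma eq_balanced_off_top (g f : state -> R) :
  balanced_off_top g -> balanced_off_top f -> g top = f top -> g =1 f.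
Proof.
move=> bal_g bal_f eq_top_gf.
suff eq_near n (y : state) : ((Q1 - y.1) + (Q2 - y.2) <= n)%N -> g y = f y.
  by move=> y; apply: (eq_near _ y (leqnn _)).
elim: n y => [|n IHn] y dist_y.
  suff -> : y = top by [].
  by apply/eqP; rewrite eq_top; have := state_le1 y; have := state_le2 y; lia.
have [-> // | ne_top] := eqVneq y top.
have eq_up1 : (y.1 < Q1)%N -> g (inord y.1.+1, inord y.2) = f (inord y.1.+1, inord y.2).
  by move=> lt_y1; apply: IHn; rewrite /= !inordK //; lia.
have eq_up2 : (y.2 < Q2)%N -> g (inord y.1, inord y.2.+1) = f (inord y.1, inord y.2.+1).
  by move=> lt_y2; apply: IHn; rewrite /= !inordK //; lia.
apply: (mulIf (lt0r_neq0 (out_rate_gt0 ne_top))).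
rewrite -[LHS](bal_g y ne_top) -[RHS](bal_f y ne_top) !inflowE (negbTE ne_top).
congr (_ + _ + _).
- by case: ifP => // /eq_up1 ->.
- by case: ifP => // /eq_up2 ->.
Qed.

Lemma edge1_rec (i : nat) : (s1 + mu) * edge1 i =
  (if (0 < i)%N then s1 * edge1 i.-1 else 0) +
  l2 * q2 ^+ Q2.-1 * q3 * q1 ^+ i * 'C(Q2 + i - 1, i)%:R.
Proof.
have := s1_mu_neq0; rewrite /edge1 /B2_ /A1_; case: i => [|i] /= neq0.
  by rewrite big_nat1 addn0 bin0 add0r; field.
by rewrite (sum_conv_recr _ _ (fun k => 'C(Q2 + k - 1, k)%:R)); field.
Qed.

Lemma edge2_rec (i : nat) : (s2 + mu) * edge2 i =
  (if (0 < i)%N then s2 * edge2 i.-1 else 0) +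
  l1 * q1 ^+ Q1.-1 * q3 * q2 ^+ i * 'C(Q1 + i - 1, i)%:R.
Proof.
have := s2_mu_neq0; rewrite /edge2 /B1_ /A2_; case: i => [|i] /= neq0.
  by rewrite big_nat1 addn0 bin0 add0r; field.
by rewrite (sum_conv_recr _ _ (fun k => 'C(Q1 + k - 1, k)%:R)); field.
Qed.

Hypotheses (hQ1 : (0 < Q1)%N) (hQ2 : (0 < Q2)%N).

Lemma pi_formula_interior (j1 j2 : nat) : (0 < j1)%N -> (0 < j2)%N ->
  pi_formula j1 j2 = binw q1 q2 (Q1 - j1) (Q2 - j2) * q3.
Proof. by rewrite /pi_formula => -> ->. Qed.

Lemma pi_formula_edge1 (j1 : nat) : (0 < j1)%N -> pi_formula j1 0 = edge1 (Q1 - j1).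
Proof. by rewrite /pi_formula => ->. Qed.

Lemma pi_formula_edge2 (j2 : nat) : (0 < j2)%N -> pi_formula 0 j2 = edge2 (Q2 - j2).
Proof. by rewrite /pi_formula => ->. Qed.

Lemma pi_formula_top : pi_formula Q1 Q2 = q3.
Proof. by rewrite pi_formula_interior // !subnn /binw bin0 !expr0 !mul1r. Qed.

Lemma pi_formula_balance (j1 j2 : nat) :
  (j1 <= Q1)%N -> (j2 <= Q2)%N -> ~~ ((j1 == Q1) && (j2 == Q2)) ->
  (if (j1 < Q1)%N then pi_formula j1.+1 j2 * drop_rate1 j2 else 0) +
  (if (j2 < Q2)%N then pi_formula j1 j2.+1 * drop_rate2 j1 else 0) =
  pi_formula j1 j2 * (demand_out j1 j2 + mu).
Proof.
rewrite /demand_out /drop_rate1 /drop_rate2.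
case: j1 => [|j1] le_j1; case: j2 => [|j2] le_j2 not_top /=.
- rewrite hQ1 hQ2 pi_formula_edge1 // pi_formula_edge2 // /pi_formula /= !subn1.
  by field; rewrite lt0r_neq0.
- rewrite hQ1 pi_formula_interior // !pi_formula_edge2 // -subn_gt0 [(Q2 - _.+2)%N]subnS.
  move: (Q2 - j2.+1)%N => i; rewrite /binw subn1 add0r [RHS]mulrC edge2_rec.
  have -> : 'C(Q1.-1 + i, Q1.-1) = 'C(Q1 + i - 1, i).
    by rewrite -{2}(addnK i Q1.-1) bin_sub ?leq_addl //; congr 'C(_, _); lia.
  by case: (0 < i)%N; ring.
- rewrite hQ2 !pi_formula_edge1 // pi_formula_interior // -subn_gt0 [(Q1 - _.+2)%N]subnS.
  move: (Q1 - j1.+1)%N => i; rewrite /binw subn1 addr0 [RHS]mulrC edge1_rec.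
  have -> : 'C(i + Q2.-1, i) = 'C(Q2 + i - 1, i) by congr 'C(_, _); lia.
  by case: (0 < i)%N; ring.
- have pos : (0 < (Q1 - j1.+1) + (Q2 - j2.+1))%N by case/nandP: not_top => /eqP; lia.
  rewrite !pi_formula_interior // -[(j1.+1 < Q1)%N]subn_gt0 -[(j2.+1 < Q2)%N]subn_gt0.
  rewrite [(Q1 - _.+2)%N]subnS [(Q2 - _.+2)%N]subnS (binw_rec _ _ pos).
  move: (Q1 - j1.+1)%N (Q2 - j2.+1)%N => i1 i2.
  have := s_mu_neq0; rewrite /q1_ /q2_ /s_.
  by case: (0 < i1)%N; case: (0 < i2)%N => neq0; field.
Qed.

Lemma pi_formula_balanced : balanced_off_top (fun x => pi_formula x.1 x.2).
Proof.
move=> y ne_top; rewrite /outflow inflowE out_rateE (negbTE ne_top) addr0.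
have le_y1 := state_le1 y; have le_y2 := state_le2 y.
rewrite -pi_formula_balance -?eq_top //.
by congr (_ + _); case: ifP => lt_y //=; rewrite !inordK.
Qed.

Lemma balance_top_mass (g : state -> R) :
  inflow rate g top = outflow rate g top -> mu * \sum_x g x = g top * (s + mu).
Proof.
rewrite /outflow inflowE out_rateE eqxx /= !ltnn /demand_out /drop_rate1 /drop_rate2 hQ1 hQ2.
rewrite !add0r addr0 => bal.
by rewrite (bigD1 top) //= mulrDr bal /s_; ring.
Qed.

Lemma ratio_ge0 (a b : R) : 0 <= a -> 0 <= b -> 0 <= a / (b + mu).
Proof. by move=> a_ge0 b_ge0; rewrite divr_ge0 // addr_ge0 // ltW. Qed.

Lemma q1_ge0 : 0 <= q1. Proof. exact: ratio_ge0 (ltW hl1) s_ge0. Qed.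
Lemma q2_ge0 : 0 <= q2. Proof. exact: ratio_ge0 (ltW hl2) s_ge0. Qed.
Lemma q3_ge0 : 0 <= q3. Proof. exact: ratio_ge0 (ltW hmu) s_ge0. Qed.
Lemma A1_ge0 : 0 <= A1. Proof. exact: ratio_ge0 s1_ge0 s1_ge0. Qed.
Lemma A2_ge0 : 0 <= A2. Proof. exact: ratio_ge0 s2_ge0 s2_ge0. Qed.
Lemma B1_ge0 : 0 <= B1. Proof. exact: ratio_ge0 (ltW hl1) s2_ge0. Qed.
Lemma B2_ge0 : 0 <= B2. Proof. exact: ratio_ge0 (ltW hl2) s1_ge0. Qed.

Lemma edge1_ge0 (i : nat) : 0 <= edge1 i.
Proof.
apply: mulr_ge0; first exact: mulr_ge0 (mulr_ge0 B2_ge0 (exprn_ge0 _ q2_ge0)) q3_ge0.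
apply: sumr_ge0 => k _.
exact: mulr_ge0 (mulr_ge0 (exprn_ge0 _ A1_ge0) (exprn_ge0 _ q1_ge0)) (ler0n _ _).
Qed.

Lemma edge2_ge0 (i : nat) : 0 <= edge2 i.
Proof.
apply: mulr_ge0; first exact: mulr_ge0 (mulr_ge0 B1_ge0 (exprn_ge0 _ q1_ge0)) q3_ge0.
apply: sumr_ge0 => k _.
exact: mulr_ge0 (mulr_ge0 (exprn_ge0 _ A2_ge0) (exprn_ge0 _ q2_ge0)) (ler0n _ _).
Qed.

Lemma pi_formula_ge0 (j1 j2 : nat) : 0 <= pi_formula j1 j2.
Proof.
rewrite /pi_formula; case: ifP => _.
  exact: mulr_ge0 (mulr_ge0 (mulr_ge0 (ler0n _ _) (exprn_ge0 _ q1_ge0)) (exprn_ge0 _ q2_ge0)) q3_ge0.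
case: ifP => _; first exact: edge1_ge0.
case: ifP => _; first exact: edge2_ge0.
have mu_ge0 := ltW hmu.
by apply: addr_ge0; apply: mulr_ge0; rewrite ?divr_ge0 ?s1_ge0 ?s2_ge0 ?edge1_ge0 ?edge2_ge0.
Qed.

Lemma stationary_pi_formula (pi : state -> R) :
  stationary l1 l2 mu p12 p21 pi -> forall x, pi x = pi_formula x.1 x.2.
Proof.
case=> _ [sum_pi bal_pi].
apply: eq_balanced_off_top => [y _ | | ]; [exact: bal_pi | exact: pi_formula_balanced |].
apply: (mulIf s_mu_neq0); rewrite /= pi_formula_top /q3_ divfK ?s_mu_neq0 //.
by have := balance_top_mass (bal_pi top); rewrite sum_pi mulr1.
Qed.

Lemma pi_formula_stationary (pi : state -> R) :
  (forall x, pi x = pi_formula x.1 x.2) -> stationary l1 l2 mu p12 p21 pi.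
Proof.
move=> piE.
have bal_pi : balanced_off_top pi.
  move=> y ne_top; rewrite /inflow /outflow piE.
  under eq_bigr do rewrite piE.
  exact: pi_formula_balanced.
have bal_top : inflow rate pi top = outflow rate pi top by apply: balance_last.
split; [by move=> x; rewrite piE pi_formula_ge0 | split].
- apply: (mulfI (lt0r_neq0 hmu)).
  by rewrite balance_top_mass // piE pi_formula_top /q3_ mulr1 divfK ?s_mu_neq0.
- by move=> y; have [-> | ] := eqVneq y top; [exact: bal_top | exact: bal_pi].
Qed.

End InventoryChain.

Theorem theorem3 (R : realFieldType) (Q1 Q2 : nat) (l1 l2 mu p12 p21 : R)
  (hQ1 : (1 <= Q1)%N) (hQ2 : (1 <= Q2)%N)
  (hl1 : 0 < l1) (hl2 : 0 < l2) (hmu : 0 < mu)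
  (hp12 : 0 <= p12 <= 1) (hp21 : 0 <= p21 <= 1) :
  forall pi : state Q1 Q2 -> R,
    stationary l1 l2 mu p12 p21 pi <->
    (forall x : state Q1 Q2,
       pi x = pi_formula Q1 Q2 l1 l2 mu p12 p21 x.1 x.2).
Proof.
move: hp12 hp21 => /andP [p12_ge0 _] /andP [p21_ge0 _] pi.
by split; [apply: stationary_pi_formula | apply: pi_formula_stationary].
Qed.
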